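(* Let $F\subseteq P_{3,4}$ be a face. Suppose there exist $f\in J_F$ and $g,c,d\in H_2$ such that $c\notin J_F$, $c-d\in J_F$, and $fg=cd$. Then $F$ is not exposed. In particular, this holds if there exist $f\in J_F$, $g\in H_2$ and $c\in H_2\setminus J_F$ with $fg=c^2$.
   Context: $H_k\subseteq\mathbb R[x,y,z]$: real ternary forms of degree $k$; $P_{3,4}=\{f\in H_4: f\ge0\text{ on }\mathbb P^2(\mathbb R)\}$. A face of $P_{3,4}$ is a convex subcone $F$ such that $a,b\in P_{3,4}$, $a+b\in F$ imply $a,b\in F$; it is exposed if $F=\ker L\cap P_{3,4}$ for a linear functional $L$ on $H_4$ nonnegative on $P_{3,4}$. $J_F=\{q\in H_2: q^2\in F\}$ (a linear subspace). *)

(* real ternary forms represented as polynomial functions R^3 -> R. *)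
From Stdlib Require Import Reals.
Open Scope R_scope.

Definition form := R -> R -> R -> R.

Definition is_form (k : nat) (p : form) : Prop :=
  exists c : nat -> nat -> R, forall x y z : R,
    p x y z = sum_f_R0 (fun i =>
                sum_f_R0 (fun j => c i j * x ^ i * y ^ j * z ^ (k - i - j)) (k - i)) k.

Definition fadd (p q : form) : form := fun x y z => p x y z + q x y z.
Definition fsub (p q : form) : form := fun x y z => p x y z - q x y z.
Definition fscal (a : R) (p : form) : form := fun x y z => a * p x y z.
Definition fmul (p q : form) : form := fun x y z => p x y z * q x y z.

Definition P34 (p : form) : Prop :=
  is_form 4 p /\ forall x y z : R, 0 <= p x y z.

Definition is_face (F : form -> Prop) : Prop :=
  (forall p, F p -> P34 p) /\
  (forall p q, F p -> F q -> F (fadd p q)) /\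
  (forall a p, 0 <= a -> F p -> F (fscal a p)) /\
  (forall a b, P34 a -> P34 b -> F (fadd a b) -> F a /\ F b).

Definition linear_on_H4 (L : form -> R) : Prop :=
  forall (a b : R) (p q : form), is_form 4 p -> is_form 4 q ->
    L (fadd (fscal a p) (fscal b q)) = a * L p + b * L q.

Definition exposed (F : form -> Prop) : Prop :=
  exists L : form -> R,
    linear_on_H4 L /\
    (forall p, P34 p -> 0 <= L p) /\
    (forall p, F p <-> (P34 p /\ L p = 0)).

Definition JF (F : form -> Prop) (q : form) : Prop :=
  is_form 2 q /\ F (fmul q q).

From Stdlib Require Import Reals Lra FunctionalExtensionality.
Open Scope R_scope.

(* Suppose a face F is exposed by a functional L >= 0 on
   P_{3,4}, so F = P_{3,4} ∩ ker L.  On quadratic forms, (q, r) |-> L(q r) is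
   a positive semidefinite symmetric bilinear form, since L(q^2) >= 0; hence
   by the Cauchy–Schwarz argument L(q^2) = 0 forces L(q r) = 0 for every r.
   Now f and e = c - d lie in J_F, i.e. L(f^2) = L(e^2) = 0, so
   L(c^2) = L(c d) + L(e c) = L(f g) + L(e c) = 0, and c^2 ∈ F: c ∈ J_F.
   This gives the first claim (which in fact needs no face hypothesis); the
   second is the case d = c, using that 0 = c - c lies in J_F because F is
   a cone containing f^2.
   The file first records closure properties of forms (linear combinations,
   products of quadratics, squares in P_{3,4}), then the vanishing lemma for
   nonnegative functionals, and finally derives the theorem. *)

Lemma form_ext (p q : form) : (forall x y z, p x y z = q x y z) -> p = q.
Proof.
  intros H. apply functional_extensionality; intro x.
  apply functional_extensionality; intro y.
  apply functional_extensionality; intro z. apply H.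
Qed.

Lemma sum_lincomb (a b : R) (u v : nat -> R) (n : nat) :
  a * sum_f_R0 u n + b * sum_f_R0 v n = sum_f_R0 (fun i => a * u i + b * v i) n.
Proof.
  rewrite !scal_sum, <- sum_plus. apply sum_eq. intros i _. ring.
Qed.

Lemma is_form_lincomb (k : nat) (a b : R) (p q : form) :
  is_form k p -> is_form k q -> is_form k (fadd (fscal a p) (fscal b q)).
Proof.
  intros [c1 H1] [c2 H2]. exists (fun i j => a * c1 i j + b * c2 i j). intros x y z.
  unfold fadd, fscal. rewrite H1, H2, sum_lincomb. apply sum_eq. intros i _.
  rewrite sum_lincomb. apply sum_eq. intros j _. ring.
Qed.

Lemma is_form_sub (k : nat) (p q : form) :
  is_form k p -> is_form k q -> is_form k (fsub p q).
Proof.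
  intros Hp Hq.
  replace (fsub p q) with (fadd (fscal 1 p) (fscal (-1) q)).
  - apply is_form_lincomb; assumption.
  - apply form_ext. intros x y z. unfold fadd, fscal, fsub. ring.
Qed.

(* Coefficients of x^i y^j z^(k-i-j) are only meaningful for i + j <= k. *)
Definition truncate (k : nat) (c : nat -> nat -> R) (i j : nat) : R :=
  if Nat.leb (i + j) k then c i j else 0.

(* Coefficients of a product of two quadratics: the Cauchy product of the
   (truncated) coefficient families. *)
Definition coef_mul (a b : nat -> nat -> R) (I J : nat) : R :=
  sum_f_R0 (fun i => sum_f_R0 (fun j =>
    truncate 2 a i j * truncate 2 b (I - i) (J - j)) J) I.

Lemma is_form_mul22 (p q : form) :
  is_form 2 p -> is_form 2 q -> is_form 4 (fmul p q).
Proof.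
  intros [a Ha] [b Hb]. exists (coef_mul a b). intros x y z.
  unfold fmul. rewrite Ha, Hb. unfold coef_mul, truncate. simpl. ring.
Qed.

Lemma square_P34 (q : form) : is_form 2 q -> P34 (fmul q q).
Proof.
  intros Hq. split.
  - apply is_form_mul22; assumption.
  - intros x y z. unfold fmul. nra.
Qed.

(* A quadratic t |-> 2 t B + t^2 A with A >= 0 that is nonnegative
   everywhere has no linear term: test it at t = -B/(A+1). *)
Lemma nonneg_quadratic_linear_term (A B : R) :
  0 <= A -> (forall t, 0 <= 2 * t * B + t * t * A) -> B = 0.
Proof.
  intros HA Hq.
  set (s := / (A + 1)).
  assert (Hs : 0 < s) by (apply Rinv_0_lt_compat; lra).
  assert (HsA : s * A < 1).
  { assert (s * (A + 1) = 1) by (unfold s; field; lra). nra. }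
  specialize (Hq (- B * s)).
  assert (Hsign : 0 <= (B * B * s) * (s * A - 2)) by nra.
  assert (HBs : B * B * s <= 0) by nra.
  assert (HBB : B * B = 0) by nra.
  nra.
Qed.

Section NonnegativeFunctional.

Variable L : form -> R.
Hypothesis L_linear : linear_on_H4 L.
Hypothesis L_nonneg : forall p, P34 p -> 0 <= L p.

Lemma L_square_expansion (q r : form) (t : R) :
  is_form 2 q -> is_form 2 r ->
  L (fmul (fadd (fscal 1 q) (fscal t r)) (fadd (fscal 1 q) (fscal t r))) =
  L (fmul q q) + 2 * t * L (fmul q r) + t * t * L (fmul r r).
Proof.
  intros Hq Hr.
  assert (Hexp : fmul (fadd (fscal 1 q) (fscal t r)) (fadd (fscal 1 q) (fscal t r)) =
    fadd (fscal 1 (fmul q q))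
         (fscal 1 (fadd (fscal (2 * t) (fmul q r)) (fscal (t * t) (fmul r r))))).
  { apply form_ext. intros x y z. unfold fmul, fadd, fscal. ring. }
  rewrite Hexp, L_linear, L_linear; try apply is_form_lincomb;
    try apply is_form_mul22; try assumption.
  ring.
Qed.

(* Cauchy–Schwarz for the semidefinite form (q, r) |-> L(q r):
   an isotropic vector is orthogonal to everything. *)
Lemma L_isotropic_orthogonal (q r : form) :
  is_form 2 q -> is_form 2 r -> L (fmul q q) = 0 -> L (fmul q r) = 0.
Proof.
  intros Hq Hr Hqq.
  apply (nonneg_quadratic_linear_term (L (fmul r r))).
  - apply L_nonneg, square_P34. assumption.
  - intros t.
    pose proof (L_nonneg _ (square_P34 _ (is_form_lincomb 2 1 t q r Hq Hr))) as Hsq.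
    rewrite L_square_expansion in Hsq by assumption. lra.
Qed.

End NonnegativeFunctional.

Lemma exposed_JF_product_closed (F : form -> Prop) (f g c d : form) :
  exposed F -> JF F f -> is_form 2 g -> is_form 2 c -> is_form 2 d ->
  JF F (fsub c d) -> fmul f g = fmul c d -> JF F c.
Proof.
  intros [L [L_linear [L_nonneg HF]]] [Hf Ff] Hg Hc Hd [He Fe] Hfg.
  split; [assumption |].
  apply HF. split; [apply square_P34; assumption |].
  assert (Lff : L (fmul f f) = 0) by (apply HF; assumption).
  assert (Lee : L (fmul (fsub c d) (fsub c d)) = 0) by (apply HF; assumption).
  assert (Lfg : L (fmul f g) = 0)
    by (apply (L_isotropic_orthogonal L L_linear L_nonneg); assumption).
  assert (Lec : L (fmul (fsub c d) c) = 0)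
    by (apply (L_isotropic_orthogonal L L_linear L_nonneg); assumption).
  assert (Hcd : fmul c d = fadd (fscal 1 (fmul c c)) (fscal (-1) (fmul (fsub c d) c))).
  { apply form_ext. intros x y z. unfold fmul, fadd, fscal, fsub. ring. }
  rewrite Hfg, Hcd, L_linear in Lfg.
  - lra.
  - apply is_form_mul22; assumption.
  - apply is_form_mul22; [apply is_form_sub |]; assumption.
Qed.

(* A face is a cone, so once J_F is nonempty it contains 0 = c - c. *)
Lemma JF_sub_self (F : form -> Prop) (f c : form) :
  is_face F -> JF F f -> is_form 2 c -> JF F (fsub c c).
Proof.
  intros [_ [_ [F_scal _]]] [_ Ff] Hc.
  split; [apply is_form_sub; assumption |].
  replace (fmul (fsub c c) (fsub c c)) with (fscal 0 (fmul f f)).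
  - apply F_scal; [lra | assumption].
  - apply form_ext. intros x y z. unfold fmul, fscal, fsub. ring.
Qed.

Theorem mainTheorem17 (F : form -> Prop) (hF : is_face F) :
  (forall f g c d : form,
      JF F f -> is_form 2 g -> is_form 2 c -> is_form 2 d ->
      ~ JF F c -> JF F (fsub c d) -> fmul f g = fmul c d ->
      ~ exposed F) /\
  (forall f g c : form,
      JF F f -> is_form 2 g -> is_form 2 c -> ~ JF F c ->
      fmul f g = fmul c c ->
      ~ exposed F).
Proof.
  split.
  - intros f g c d Hf Hg Hc Hd Hnc He Hfg Hexp.
    exact (Hnc (exposed_JF_product_closed F f g c d Hexp Hf Hg Hc Hd He Hfg)).
  - intros f g c Hf Hg Hc Hnc Hfg Hexp.
    apply Hnc.
    exact (exposed_JF_product_closed F f g c c Hexp Hf Hg Hc Hc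
             (JF_sub_self F f c hF Hf Hc) Hfg).
Qed.
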